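(* Write \[ \frac{2q J_{20}^{15} J_{2,20} J_{10,20}}{J_{1,20}^3 J_{3,20}^2 J_{4,20}^2 J_{5,20}^2 J_{6,20} J_{7,20}^2 J_{9,20}^3} = \sum_{n\ge 1} b''(n) q^n . \] Then $b''(n) \ge 2n$ for all $n \ge 1$.
   Context: Notation: $(a;q)_\infty = \prod_{i\ge 0}(1-aq^i)$ and $(a_1,\dots,a_k;q)_\infty = (a_1;q)_\infty\cdots(a_k;q)_\infty$. For positive integers $a<b$: $J_b = (q^b;q^b)_\infty$ and $J_{a,b} = (q^a, q^{b-a}, q^b; q^b)_\infty$. *)

(* Formal power series in q with integer coefficients are
   handled through truncation: the coefficient of q^n of an infinite product
   of factors (1 - q^k) (k >= 1) and of their inverses 1/(1 - q^k) is the
   coefficient of q^n of the polynomial obtained by keeping the factors with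
   index i <= n and expanding each 1/(1-q^k) as sum_{j<=n} q^{kj}; all these
   agree with the true series modulo q^(n+1). *)
From HB Require Import structures.
From mathcomp Require Import all_boot all_order all_algebra.
Set Implicit Arguments. Unset Strict Implicit. Unset Printing Implicit Defensive.
Import Order.TTheory GRing.Theory Num.Theory.
Local Open Scope ring_scope.

(* (q^a; q^m)_oo truncated with N+1 factors (exact modulo q^(N+1) when a,m >= 1) *)
Definition poch_tr (a m N : nat) : {poly int} :=
  \prod_(i < N.+1) (1 - 'X^(a + m * i)).

(* 1/(q^a; q^m)_oo truncated (exact modulo q^(N+1) when a,m >= 1) *)
Definition ipoch_tr (a m N : nat) : {poly int} :=
  \prod_(i < N.+1) \sum_(j < N.+1) 'X^((a + m * i) * j).

(* J_b = (q^b;q^b)_oo and J_{a,b} = (q^a, q^{b-a}, q^b; q^b)_oo, truncated *)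
Definition J_tr (b N : nat) : {poly int} := poch_tr b b N.
Definition Jab_tr (a b N : nat) : {poly int} :=
  poch_tr a b N * poch_tr (b - a) b N * poch_tr b b N.
Definition iJab_tr (a b N : nat) : {poly int} :=
  ipoch_tr a b N * ipoch_tr (b - a) b N * ipoch_tr b b N.

Definition F_tr (N : nat) : {poly int} :=
  2%:R *: 'X * J_tr 20 N ^+ 15 * Jab_tr 2 20 N * Jab_tr 10 20 N
  * iJab_tr 1 20 N ^+ 3 * iJab_tr 3 20 N ^+ 2 * iJab_tr 4 20 N ^+ 2
  * iJab_tr 5 20 N ^+ 2 * iJab_tr 6 20 N * iJab_tr 7 20 N ^+ 2
  * iJab_tr 9 20 N ^+ 3.

Definition bpp (n : nat) : int := (F_tr n)`_n.

(* Modulo q^(N+1) the series equals 2q/(1-q)^2 times a cofactor W whose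
   coefficients dominate those of 1.  Indeed J_20 cancels against the
   (q^20;q^20)_oo hidden in the J_{a,20} of the denominator; every remaining
   numerator (q^c;q^20)_oo splits as (q^c;q^40)_oo (q^(c+20);q^40)_oo, and each
   factor 1 - q^(c+40i) is matched with denominators 1/(1 - q^(a+20i)) (and
   1/(1 - q^(b+20i))) where c = 2a (resp. c = a + b); both
   (1 - q^(2a))/(1 - q^a) = 1 + q^a and (1 - q^(a+b))/((1 - q^a)(1 - q^b)) have
   nonnegative coefficients.  The leading factors 1/(1-q) of two of the three
   1/(q;q^20)_oo give 1/(1-q)^2, so b''(n) >= 2 [q^(n-1)] 1/(1-q)^2 = 2n. *)

From HB Require Import structures.
From mathcomp Require Import all_boot all_order all_algebra.
From mathcomp Require Import zify ring.
Import Order.TTheory GRing.Theory Num.Theory.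
Set Implicit Arguments. Unset Strict Implicit. Unset Printing Implicit Defensive.
Local Open Scope ring_scope.

Section TruncatedPowerSeries.

Context {R : comNzRingType}.
Implicit Types p q : {poly R}.

Definition eqmodX N p q := exists r, p = q + 'X^(N.+1) * r.

Lemma eqmodX_refl N p : eqmodX N p p.
Proof. by exists 0; rewrite mulr0 addr0. Qed.

Lemma eqmodX_sym N p q : eqmodX N p q -> eqmodX N q p.
Proof. by move=> [r ->]; exists (- r); rewrite mulrN addrK. Qed.

Lemma eqmodX_trans N p q s : eqmodX N p q -> eqmodX N q s -> eqmodX N p s.
Proof. by move=> [r ->] [t ->]; exists (t + r); ring. Qed.

Lemma eqmodXD N p p' q q' :
  eqmodX N p p' -> eqmodX N q q' -> eqmodX N (p + q) (p' + q').
Proof. by move=> [r ->] [s ->]; exists (r + s); ring. Qed.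

Lemma eqmodXM N p p' q q' :
  eqmodX N p p' -> eqmodX N q q' -> eqmodX N (p * q) (p' * q').
Proof. by move=> [r ->] [s ->]; exists (r * q' + p' * s + 'X^(N.+1) * r * s); ring. Qed.

Lemma eqmodXX N p q k : eqmodX N p q -> eqmodX N (p ^+ k) (q ^+ k).
Proof.
move=> epq; elim: k => [|k IHk]; first by rewrite !expr0; apply: eqmodX_refl.
by rewrite !exprS; apply: eqmodXM.
Qed.

Lemma eqmodX_prod1 N (I : Type) (r : seq I) (P : pred I) (F : I -> {poly R}) :
  (forall i, P i -> eqmodX N (F i) 1) -> eqmodX N (\prod_(i <- r | P i) F i) 1.
Proof.
move=> F1; apply: (big_ind (eqmodX N ^~ 1)) => //; first exact: eqmodX_refl.
by move=> p q p1 q1; rewrite -(mulr1 1); apply: eqmodXM.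
Qed.

Lemma eqmodX_prod_widen N (f : nat -> {poly R}) M M' : (M <= M')%N ->
  (forall i, (M <= i < M')%N -> eqmodX N (f i) 1) ->
  eqmodX N (\prod_(i < M) f i) (\prod_(i < M') f i).
Proof.
move=> leMM' f1; rewrite -!(big_mkord xpredT) (big_cat_nat (leq0n M) leMM') /=.
rewrite -{1}[\prod_(0 <= i < M) f i]mulr1; apply: eqmodXM; first exact: eqmodX_refl.
apply/eqmodX_sym; rewrite big_seq; apply: eqmodX_prod1 => i.
by rewrite mem_index_iota; apply: f1.
Qed.

Lemma eqmodX_coef N p q k : eqmodX N p q -> (k <= N)%N -> p`_k = q`_k.
Proof. by move=> [r ->] lekN; rewrite coefD coefXnM ltnS lekN addr0. Qed.

Lemma eqmodX_1subXn N e : (N < e)%N -> eqmodX N (1 - 'X^e) 1.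
Proof.
by move=> ltNe; exists (- 'X^(e - N.+1)); rewrite mulrN -exprD subnKC.
Qed.

Definition geom N e : {poly R} := \sum_(j < N.+1) 'X^(e * j).

Lemma geom_recl N e : geom N e = 1 + 'X^e * \sum_(j < N) 'X^(e * j).
Proof.
rewrite /geom big_ord_recl muln0 expr0 big_distrr; congr (_ + _).
by apply: eq_bigr => j _; rewrite /= -exprD mulnS.
Qed.

Lemma eqmodX_geom N e : (N < e)%N -> eqmodX N (geom N e) 1.
Proof.
move=> ltNe; rewrite geom_recl; exists ('X^(e - N.+1) * \sum_(j < N) 'X^(e * j)).
by rewrite mulrA -exprD subnKC.
Qed.

Lemma coef_geom1_sqr N k : (k <= N)%N -> (geom N 1 ^+ 2)`_k = k.+1%:R.
Proof.
move=> lekN; have geom1E : geom N 1 = \poly_(i < N.+1) 1.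
  by rewrite poly_def; apply: eq_bigr => i _; rewrite mul1n scale1r.
rewrite expr2 coefM -[k.+1 in RHS]card_ord -sumr_const.
by apply: eq_bigr => -[j ltjk] _; rewrite geom1E !coef_poly !ifT ?mulr1 //=; lia.
Qed.

Lemma mul_1subXn_geom N e : (1 - 'X^e) * geom N e = 1 - 'X^(e * N.+1).
Proof.
have -> : geom N e = \sum_(j < N.+1) 'X^e ^+ j by apply: eq_bigr => j _; rewrite exprM.
by rewrite exprM -opprB mulNr -subrX1 opprB.
Qed.

Lemma eqmodX_1subXn_geom N e : (0 < e)%N -> eqmodX N ((1 - 'X^e) * geom N e) 1.
Proof. by move=> e_gt0; rewrite mul_1subXn_geom; apply: eqmodX_1subXn; rewrite leq_pmull. Qed.

End TruncatedPowerSeries.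

Section NonnegativeCoefficients.

Context {R : numDomainType}.
Implicit Types p q w : {poly R}.

Definition nneg_upto N p := [forall k : 'I_N.+1, 0 <= p`_k].
Definition ge1_upto N p := nneg_upto N (p - 1).

Lemma nneg_uptoP N p : reflect (forall k, (k <= N)%N -> 0 <= p`_k) (nneg_upto N p).
Proof.
apply: (iffP forallP) => [p0 k lekN | p0 k].
  exact: p0 (Ordinal (lekN : (k < N.+1)%N)).
exact: p0 (ltn_ord k).
Qed.

Lemma nneg_uptoD N p q : nneg_upto N p -> nneg_upto N q -> nneg_upto N (p + q).
Proof.
move=> /nneg_uptoP p0 /nneg_uptoP q0; apply/nneg_uptoP => k lekN.
by rewrite coefD addr_ge0 ?p0 ?q0.
Qed.

Lemma nneg_uptoM N p q : nneg_upto N p -> nneg_upto N q -> nneg_upto N (p * q).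
Proof.
move=> /nneg_uptoP p0 /nneg_uptoP q0; apply/nneg_uptoP => k lekN.
rewrite coefM; apply: sumr_ge0 => -[j ltjk] _ /=.
by apply: mulr_ge0; [apply: p0 | apply: q0]; lia.
Qed.

Lemma nneg_uptoXn N e : nneg_upto N 'X^e.
Proof. by apply/nneg_uptoP => k _; rewrite coefXn; case: (k == e). Qed.

Lemma nneg_upto_sum N (I : Type) (r : seq I) (P : pred I) (F : I -> {poly R}) :
  (forall i, P i -> nneg_upto N (F i)) -> nneg_upto N (\sum_(i <- r | P i) F i).
Proof.
move=> F0; apply: (big_ind (nneg_upto N)) => //; last exact: nneg_uptoD.
by apply/nneg_uptoP => k _; rewrite coef0.
Qed.

Lemma ge1_upto_nneg N p : ge1_upto N p -> nneg_upto N p.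
Proof.
move=> p1; rewrite -(subrK 1 p); apply: nneg_uptoD => //.
by apply/nneg_uptoP => k _; rewrite coef1; case: (k == 0%N).
Qed.

Lemma ge1_upto1 N : ge1_upto N 1.
Proof. by apply/nneg_uptoP => k _; rewrite subrr coef0. Qed.

Lemma ge1_uptoM N p q : ge1_upto N p -> ge1_upto N q -> ge1_upto N (p * q).
Proof.
move=> p1 q1; rewrite /ge1_upto.
have -> : p * q - 1 = (p - 1) * (q - 1) + (p - 1) + (q - 1) by ring.
by do 2?apply: nneg_uptoD => //; apply: nneg_uptoM.
Qed.

Lemma ge1_uptoX N p k : ge1_upto N p -> ge1_upto N (p ^+ k).
Proof.
move=> p1; elim: k => [|k IHk]; first by rewrite expr0; apply: ge1_upto1.
by rewrite exprS; apply: ge1_uptoM.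
Qed.

Lemma ge1_upto_prod N (I : Type) (r : seq I) (P : pred I) (F : I -> {poly R}) :
  (forall i, P i -> ge1_upto N (F i)) -> ge1_upto N (\prod_(i <- r | P i) F i).
Proof.
by move=> F1; apply: (big_ind (ge1_upto N)) => //; [exact: ge1_upto1 | exact: ge1_uptoM].
Qed.

Lemma ge1_upto_eqmodX N p q : eqmodX N p q -> ge1_upto N q -> ge1_upto N p.
Proof.
move=> [r ->] /nneg_uptoP q1; apply/nneg_uptoP => k lekN.
by rewrite addrAC coefD coefXnM ltnS lekN addr0 q1.
Qed.

Lemma coefM_ge1_upto N p w k :
  nneg_upto N p -> ge1_upto N w -> (k <= N)%N -> p`_k <= (p * w)`_k.
Proof.
move=> p0 w1 lekN; rewrite -{1}[p]mulr1 -(subrK 1 w) mulrDr mulr1 coefD lerDr.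
by move/nneg_uptoP: (nneg_uptoM p0 w1); apply.
Qed.

Lemma ge1_upto_geom N e : ge1_upto N (geom N e).
Proof.
rewrite /ge1_upto geom_recl addrC addKr.
apply: nneg_uptoM; first exact: nneg_uptoXn.
by apply: nneg_upto_sum => j _; apply: nneg_uptoXn.
Qed.

Lemma ge1_upto_1subXdouble_geom N e :
  (0 < e)%N -> ge1_upto N ((1 - 'X^(e + e)) * geom N e).
Proof.
move=> e_gt0; have -> : (1 - 'X^(e + e)) * geom N e =
    (1 + 'X^e) * ((1 - 'X^e) * geom N e) :> {poly R} by rewrite exprD; ring.
apply: (ge1_upto_eqmodX (eqmodXM (eqmodX_refl _ _) (eqmodX_1subXn_geom N e_gt0))).
by rewrite mulr1 /ge1_upto addrC addKr; apply: nneg_uptoXn.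
Qed.

Lemma ge1_upto_1subXD_geomM N e1 e2 : (0 < e1)%N -> (0 < e2)%N ->
  ge1_upto N ((1 - 'X^(e1 + e2)) * geom N e1 * geom N e2).
Proof.
move=> e1_gt0 e2_gt0.
have -> : (1 - 'X^(e1 + e2)) * geom N e1 * geom N e2 =
    geom N e2 * ((1 - 'X^e1) * geom N e1)
    + 'X^e1 * geom N e1 * ((1 - 'X^e2) * geom N e2) :> {poly R}.
  by rewrite exprD; ring.
apply: (ge1_upto_eqmodX (q := geom N e2 * 1 + 'X^e1 * geom N e1 * 1)).
  by apply: eqmodXD; apply: eqmodXM (eqmodX_refl _ _) (eqmodX_1subXn_geom _ _).
rewrite !mulr1 /ge1_upto addrAC; apply: nneg_uptoD; first exact: ge1_upto_geom.
by apply: nneg_uptoM; [exact: nneg_uptoXn | apply/ge1_upto_nneg/ge1_upto_geom].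
Qed.

End NonnegativeCoefficients.

Lemma ipoch_trE a m N : ipoch_tr a m N = \prod_(i < N.+1) geom N (a + m * i).
Proof. by []. Qed.

Lemma ge1_upto_ipoch_tr a m N : ge1_upto N (ipoch_tr a m N).
Proof. by rewrite ipoch_trE; apply: ge1_upto_prod => i _; apply: ge1_upto_geom. Qed.

Lemma eqmodX_poch_ipoch_tr a m N : (0 < a)%N ->
  eqmodX N (poch_tr a m N * ipoch_tr a m N) 1.
Proof.
move=> a_gt0; rewrite ipoch_trE /poch_tr -big_split /=.
by apply: eqmodX_prod1 => i _; apply: eqmodX_1subXn_geom; rewrite addn_gt0 a_gt0.
Qed.

Lemma poch_tr_eqmodX_split a m N : (0 < m)%N ->
  eqmodX N (poch_tr a m N) (poch_tr a (m * 2) N * poch_tr (a + m) (m * 2) N).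
Proof.
move=> m_gt0; pose f i : {poly int} := 1 - 'X^(a + m * i).
apply: (@eqmodX_trans _ _ _ (\prod_(i < N.+1 * 2) f i)).
  apply: eqmodX_prod_widen => [|i /andP[leNi _]]; first by rewrite leq_pmulr.
  by apply: eqmodX_1subXn; nia.
have pair_f i : \prod_(i * 2 <= j < i.+1 * 2) f j =
    (1 - 'X^(a + m * 2 * i)) * (1 - 'X^(a + m + m * 2 * i)).
  by rewrite big_ltn ?big_nat1 /f; [congr ((1 - 'X^_) * (1 - 'X^_)) | ]; lia.
rewrite -(big_mkord xpredT) big_nat_mul (eq_bigr _ (fun i _ => pair_f i)) big_mkord.
by rewrite /poch_tr -big_split; apply: eqmodX_refl.
Qed.

Lemma ipoch_tr_eqmodX_shift a m N : (0 < m)%N ->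
  eqmodX N (ipoch_tr a m N) (geom N a * ipoch_tr (a + m) m N).
Proof.
move=> m_gt0; rewrite !ipoch_trE big_ord_recl muln0 addn0.
apply: eqmodXM; first exact: eqmodX_refl.
have -> : \prod_(i < N) geom N (a + m * lift ord0 i) =
    \prod_(i < N) geom N (a + m + m * i) :> {poly int}.
  by apply: eq_bigr => i _; rewrite lift0 /= mulnS addnA.
apply: (eqmodX_prod_widen (f := fun i => geom N (a + m + m * i))) => // i /andP[leNi _].
by apply: eqmodX_geom; nia.
Qed.

Lemma ge1_upto_poch_ipoch_double a m N : (0 < a)%N ->
  ge1_upto N (poch_tr (a + a) (m * 2) N * ipoch_tr a m N).
Proof.
move=> a_gt0; rewrite ipoch_trE /poch_tr -big_split; apply: ge1_upto_prod => i _ /=.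
have -> : (a + a + m * 2 * i = (a + m * i) + (a + m * i))%N by lia.
by apply: ge1_upto_1subXdouble_geom; rewrite addn_gt0 a_gt0.
Qed.

Lemma ge1_upto_poch_ipoch_sum a b m N : (0 < a)%N -> (0 < b)%N ->
  ge1_upto N (poch_tr (a + b) (m * 2) N * ipoch_tr a m N * ipoch_tr b m N).
Proof.
move=> a_gt0 b_gt0; rewrite !ipoch_trE /poch_tr -!big_split.
apply: ge1_upto_prod => i _ /=.
have -> : (a + b + m * 2 * i = (a + m * i) + (b + m * i))%N by lia.
by apply: ge1_upto_1subXD_geomM; rewrite addn_gt0 ?a_gt0 ?b_gt0.
Qed.

Definition F_cofactor N : {poly int} :=
  (poch_tr 2 40 N * ipoch_tr 1 20 N) * (poch_tr 18 40 N * ipoch_tr 9 20 N)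
  * (poch_tr 10 40 N * ipoch_tr 5 20 N) ^+ 2
  * (poch_tr 22 40 N * ipoch_tr 11 20 N) * (poch_tr 38 40 N * ipoch_tr 19 20 N)
  * (poch_tr 30 40 N * ipoch_tr 15 20 N) ^+ 2
  * (poch_tr 20 40 N * ipoch_tr 4 20 N * ipoch_tr 16 20 N)
  * (poch_tr 20 40 N * ipoch_tr 3 20 N * ipoch_tr 17 20 N)
  * (poch_tr 40 40 N * ipoch_tr 7 20 N * ipoch_tr 33 20 N) ^+ 2
  * ipoch_tr 21 20 N ^+ 2 * ipoch_tr 19 20 N ^+ 2 * ipoch_tr 3 20 N
  * ipoch_tr 17 20 N * ipoch_tr 4 20 N * ipoch_tr 16 20 N * ipoch_tr 6 20 N
  * ipoch_tr 14 20 N * ipoch_tr 9 20 N ^+ 2 * ipoch_tr 11 20 N ^+ 2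
  * geom N 13 ^+ 2.

Lemma ge1_upto_F_cofactor N : ge1_upto N (F_cofactor N).
Proof.
(* [c] is kept free so that unification need not split a literal into [a + a];
   the syntactic dispatch below avoids failed unifications with big products,
   which are very slow. *)
have double a c : (0 < a)%N -> c = (a + a)%N ->
    ge1_upto N (poch_tr c 40 N * ipoch_tr a 20 N).
  by move=> a_gt0 ->; apply: (ge1_upto_poch_ipoch_double 20 N a_gt0).
have sum a b c : (0 < a)%N -> (0 < b)%N -> c = (a + b)%N ->
    ge1_upto N (poch_tr c 40 N * ipoch_tr a 20 N * ipoch_tr b 20 N).
  by move=> a_gt0 b_gt0 ->; apply: (ge1_upto_poch_ipoch_sum 20 N a_gt0 b_gt0).
rewrite /F_cofactor.
repeat match goal with
  | |- is_true (ge1_upto _ (poch_tr _ _ _ * ipoch_tr _ _ _ * ipoch_tr _ _ _)) => exact: sum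
  | |- is_true (ge1_upto _ (poch_tr _ _ _ * ipoch_tr _ _ _)) => exact: double
  | |- is_true (ge1_upto _ (_ * _)) => apply: ge1_uptoM
  | |- is_true (ge1_upto _ (_ ^+ _)) => apply: ge1_uptoX
  | |- is_true (ge1_upto _ (ipoch_tr _ _ _)) => exact: ge1_upto_ipoch_tr
  | |- is_true (ge1_upto _ (geom _ _)) => exact: ge1_upto_geom
  end.
Qed.

Lemma F_tr_eqmodX N :
  eqmodX N (F_tr N) (2%:R *: 'X * geom N 1 ^+ 2 * F_cofactor N).
Proof.
pose shape (j p20 p2 p18 p10 i1 i13 : {poly int}) :=
  2%:R *: 'X * j ^+ 15 * p20 ^+ 2 * p2 * p18 * p10 ^+ 2 * ipoch_tr 1 20 N * i1 ^+ 2
  * i13 ^+ 2 * ipoch_tr 19 20 N ^+ 3 * ipoch_tr 3 20 N ^+ 2 * ipoch_tr 17 20 N ^+ 2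
  * ipoch_tr 4 20 N ^+ 2 * ipoch_tr 16 20 N ^+ 2 * ipoch_tr 5 20 N ^+ 2
  * ipoch_tr 15 20 N ^+ 2 * ipoch_tr 6 20 N * ipoch_tr 14 20 N * ipoch_tr 7 20 N ^+ 2
  * ipoch_tr 9 20 N ^+ 3 * ipoch_tr 11 20 N ^+ 3.
have -> : F_tr N = shape (poch_tr 20 20 N * ipoch_tr 20 20 N) (poch_tr 20 20 N)
    (poch_tr 2 20 N) (poch_tr 18 20 N) (poch_tr 10 20 N) (ipoch_tr 1 20 N) (ipoch_tr 13 20 N).
  by rewrite /F_tr /J_tr /Jab_tr /iJab_tr /shape; ring.
have -> : 2%:R *: 'X * geom N 1 ^+ 2 * F_cofactor N =
    shape 1 (poch_tr 20 40 N * poch_tr 40 40 N) (poch_tr 2 40 N * poch_tr 22 40 N)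
      (poch_tr 18 40 N * poch_tr 38 40 N) (poch_tr 10 40 N * poch_tr 30 40 N)
      (geom N 1 * ipoch_tr 21 20 N) (geom N 13 * ipoch_tr 33 20 N).
  by rewrite /F_cofactor /shape; ring.
rewrite /shape; repeat first [ exact: eqmodX_poch_ipoch_tr | exact: poch_tr_eqmodX_split
  | exact: ipoch_tr_eqmodX_shift | exact: eqmodX_refl | apply: eqmodXX | apply: eqmodXM ].
Qed.

Theorem mainTheorem7 : forall n : nat, (1 <= n)%N -> (2 * n)%:Z <= bpp n.
Proof.
move=> n n_gt0; rewrite /bpp (eqmodX_coef (F_tr_eqmodX n) (leqnn n)).
rewrite -mulrA -scalerAl coefZ coefXM (gtn_eqF n_gt0).
have := coefM_ge1_upto (ge1_upto_nneg (ge1_uptoX 2 (ge1_upto_geom n 1)))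
  (ge1_upto_F_cofactor n) (leq_pred n).
rewrite coef_geom1_sqr ?leq_pred // prednK // natz.
by move=> le_n_y; rewrite PoszM; apply: ler_wpM2l.
Qed.
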